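(* Let $n_1\geq n_2\geq 2$ be integers and let $E$ be the edge set of $\textsc{Grid}(n_1,n_2)$. Define $g:E\to[2n_1n_2-n_1-n_2]$ by $$g(\{(i,j),(i,j+1)\})=(i-1)(2n_2-1)+j\quad\text{for }(i,j)\in[n_1]\times[n_2-1],$$ $$g(\{(i,j),(i+1,j)\})=(n_1-i)(2n_2-1)+1-j\quad\text{for }(i,j)\in[n_1-1]\times[n_2].$$ Then $g$ is a $Q_2$-magic edge labeling of $\textsc{Grid}(n_1,n_2)$ with $Q_2$-magic sum $(2n_1-1)(2n_2-1)+1$.
   Context: $[k]=\{1,\ldots,k\}$. $\textsc{Grid}(n_1,n_2)$ is the graph with vertex set $[n_1]\times[n_2]$ in which $(i,j)$ and $(i',j')$ are adjacent iff $|i-i'|+|j-j'|=1$; it has $2n_1n_2-n_1-n_2$ edges. $Q_2$ is the 4-cycle $\textsc{Grid}(2,2)$. A bijection $g:E\to\{1,\ldots,|E|\}$ on the edge set of a graph $G=(V,E)$ is an $H$-magic edge labeling if there is a constant $c'$ (the $H$-magic sum) with $\sum_{e\in E(H')}g(e)=c'$ for every subgraph $H'\subseteq G$ isomorphic to $H$. *)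

From HB Require Import structures.
From mathcomp Require Import all_boot all_order all_algebra.
Set Implicit Arguments. Unset Strict Implicit. Unset Printing Implicit Defensive.

(* Vertices of Grid(n1,n2): 'I_n1 * 'I_n2; the 0-indexed vertex (a,b)
   stands for the paper's vertex (a+1, b+1). *)
Definition gvert (n1 n2 : nat) : finType := ('I_n1 * 'I_n2)%type.

Definition grid_adj (n1 n2 : nat) : rel (gvert n1 n2) :=
  fun u v => (`|Posz (val u.1) - Posz (val v.1)|%N + `|Posz (val u.2) - Posz (val v.2)|%N == 1)%N.

Definition grid_edges (n1 n2 : nat) : {set {set gvert n1 n2}} :=
  [set [set u; v] | u in [set: gvert n1 n2], v in [set: gvert n1 n2] & grid_adj u v].

(* General notion: Q2-magic edge labeling of a graph (V, adj) with edge set E.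
   g is a bijection E -> {1,..,|E|}, and every subgraph isomorphic to Q2 = C4
   (given by 4 distinct vertices a,b,c,d with edges ab, bc, cd, da) has edge-label
   sum c. *)
Definition Q2_magic (V : finType) (adj : rel V) (E : {set {set V}})
    (g : {set V} -> nat) (c : nat) : Prop :=
  [/\ {in E &, injective g},
      (forall e, e \in E -> 1 <= g e <= #|E|)%N,
      (forall k, 1 <= k <= #|E| -> exists2 e, e \in E & g e = k)%N &
      (forall a b c' d : V, uniq [:: a; b; c'; d] ->
         adj a b -> adj b c' -> adj c' d -> adj d a ->
         (g [set a; b] + g [set b; c'] + g [set c'; d] + g [set d; a] = c)%N)].

(* The labeling of the paper, with 1-indexed coordinates (i,j):
   horizontal edge {(i,j),(i,j+1)} gets (i-1)(2n2-1)+j,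
   vertical edge   {(i,j),(i+1,j)} gets (n1-i)(2n2-1)+1-j. *)
Definition lab_h (n1 n2 i j : nat) : nat := ((i - 1) * (2 * n2 - 1) + j)%N.
Definition lab_v (n1 n2 i j : nat) : nat := ((n1 - i) * (2 * n2 - 1) + 1 - j)%N.

Definition lab_pair (n1 n2 : nat) (u v : gvert n1 n2) : nat :=
  if (val v.1 == val u.1) && (val v.2 == (val u.2).+1) then
    lab_h n1 n2 (val u.1).+1 (val u.2).+1
  else if (val v.2 == val u.2) && (val v.1 == (val u.1).+1) then
    lab_v n1 n2 (val u.1).+1 (val u.2).+1
  else 0%N.

(* g on an edge e = {u,v}: exactly one ordered pair of its endpoints contributes. *)
Definition grid_lab (n1 n2 : nat) (e : {set gvert n1 n2}) : nat :=
  (\sum_(u in e) \sum_(v in e) lab_pair u v)%N.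

(** With K = 2 n2 - 1, the label of the horizontal edge leaving the 0-indexed
    vertex (x, y) to the right is x K + y + 1, and that of the vertical edge
    leaving (x, y) downwards is (n1 - x - 2) K + (K - 1 - y) + 1.  Writing
    labels minus one in base K, horizontal edges are exactly the digits
    r < n2 - 1 and vertical edges exactly the digits r >= n2 - 1, so the
    labelling is a bijection onto [1, (n1 - 1) K + n2 - 1], the number of edges.
    A 4-cycle of the grid is a unit square: its vertex of least x + y is the
    upper-left corner, whose two cycle neighbours are its right and lower
    neighbours.  The four labels of the unit square at (i, j) add up to
    (2 i + 1) K + 2 j + 2 + 2 (n1 - i - 1) K - 2 j - 1 = (2 n1 - 1) K + 1. *)

From HB Require Import structures.
From mathcomp Require Import all_boot all_order all_algebra zify.

Set Implicit Arguments.
Unset Strict Implicit.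
Unset Printing Implicit Defensive.

Lemma divmod_uniq d q r q' r' :
  r < d -> r' < d -> q * d + r = q' * d + r' -> q = q' /\ r = r'.
Proof. by move=> lt_r lt_r' e; have := @edivn_eq d q r lt_r; rewrite e edivn_eq // => -[]. Qed.

Section GridLabeling.

Variables n1 n2 : nat.

Local Notation V := (gvert n1 n2).
Local Notation adj := (@grid_adj n1 n2).
Local Notation E := (grid_edges n1 n2).
Local Notation g := (@grid_lab n1 n2).
Local Notation magic := ((2 * n1 - 1) * (2 * n2 - 1) + 1).

Definition right_nbr (u v : V) := (val v.1 == val u.1) && (val v.2 == (val u.2).+1).
Definition down_nbr (u v : V) := (val v.2 == val u.2) && (val v.1 == (val u.1).+1).

Lemma gvert_eq (u v : V) : val u.1 = val v.1 -> val u.2 = val v.2 -> u = v.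
Proof. by case: u v => [u1 u2] [v1 v2] /= e1 e2; congr pair; apply: val_inj. Qed.

Lemma grid_adj_sym : symmetric adj.
Proof. by move=> u v; rewrite /grid_adj distnC (distnC (val u.2)). Qed.

Lemma grid_adjP (u v : V) :
  adj u v -> [\/ right_nbr u v, right_nbr v u, down_nbr u v | down_nbr v u].
Proof.
rewrite /grid_adj /right_nbr /down_nbr => /eqP h.
have : (val v.1 = val u.1 /\ (val v.2 = (val u.2).+1 \/ val u.2 = (val v.2).+1)) \/
       (val v.2 = val u.2 /\ (val v.1 = (val u.1).+1 \/ val u.1 = (val v.1).+1)) by lia.
by case=> -[-> [->|->]]; rewrite !eqxx; [constructor 1|constructor 2|constructor 3|constructor 4].
Qed.

Lemma right_nbr_adj (u v : V) : right_nbr u v -> adj u v.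
Proof. by rewrite /right_nbr /grid_adj => /andP[/eqP ? /eqP ?]; lia. Qed.

Lemma down_nbr_adj (u v : V) : down_nbr u v -> adj u v.
Proof. by rewrite /down_nbr /grid_adj => /andP[/eqP ? /eqP ?]; lia. Qed.

Lemma right_nbr_uniq (u v w : V) : right_nbr u v -> right_nbr u w -> v = w.
Proof.
by move=> /andP[/eqP e1 /eqP e2] /andP[/eqP f1 /eqP f2]; apply: gvert_eq; rewrite ?e1 ?e2 ?f1 ?f2.
Qed.

Lemma down_nbr_uniq (u v w : V) : down_nbr u v -> down_nbr u w -> v = w.
Proof.
by move=> /andP[/eqP e1 /eqP e2] /andP[/eqP f1 /eqP f2]; apply: gvert_eq; rewrite ?e1 ?e2 ?f1 ?f2.
Qed.

Lemma right_nbr_ltn (u v : V) : right_nbr u v -> (val u.2).+1 < n2.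
Proof. by rewrite /right_nbr => /andP[_ /eqP <-]; apply: ltn_ord. Qed.

Lemma down_nbr_ltn (u v : V) : down_nbr u v -> (val u.1).+1 < n1.
Proof. by rewrite /down_nbr => /andP[_ /eqP <-]; apply: ltn_ord. Qed.

Definition hlab x y := lab_h n1 n2 x.+1 y.+1.
Definition vlab x y := lab_v n1 n2 x.+1 y.+1.

Lemma lab_pairxx (u : V) : lab_pair u u = 0.
Proof. by rewrite /lab_pair !eqxx ?(ltn_eqF (ltnSn _)) ?(gtn_eqF (ltnSn _)). Qed.

Lemma grid_lab2 (u v : V) : u != v -> g [set u; v] = lab_pair u v + lab_pair v u.
Proof.
move=> uv; have vu : u \notin [set v] by rewrite inE.
by rewrite /grid_lab big_setU1 // big_set1 !big_setU1 // !big_set1 !lab_pairxx /= add0n addn0.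
Qed.

Lemma grid_labC (u v : V) : g [set u; v] = g [set v; u].
Proof. by rewrite setUC. Qed.

Lemma grid_lab_right (u v : V) : right_nbr u v -> g [set u; v] = hlab (val u.1) (val u.2).
Proof.
case/andP=> /eqP e1 /eqP e2; have uv : u != v by apply/eqP => uv; rewrite uv in e2; lia.
by rewrite grid_lab2 // /lab_pair /hlab e1 e2 !eqxx /= !ltn_eqF ?addn0.
Qed.

Lemma grid_lab_down (u v : V) : down_nbr u v -> g [set u; v] = vlab (val u.1) (val u.2).
Proof.
case/andP=> /eqP e1 /eqP e2; have uv : u != v by apply/eqP => uv; rewrite uv in e2; lia.
rewrite grid_lab2 // /lab_pair /vlab e1 e2 !eqxx /= (gtn_eqF (ltnSn _)).
by rewrite !(ltn_eqF (ltnSn _)) (ltn_eqF (leqnSn _)) addn0.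
Qed.

Lemma mem_grid_edges (u v : V) : adj u v -> [set u; v] \in E.
Proof. by move=> uv; apply/imset2P; exists u v; rewrite ?inE. Qed.

Variant grid_edge_spec (e : {set V}) : nat -> Prop :=
  | GridEdgeRight p q of right_nbr p q & e = [set p; q] :
      grid_edge_spec e (hlab (val p.1) (val p.2))
  | GridEdgeDown p q of down_nbr p q & e = [set p; q] :
      grid_edge_spec e (vlab (val p.1) (val p.2)).

Lemma grid_edgeP e : e \in E -> grid_edge_spec e (g e).
Proof.
case/imset2P=> u v _; rewrite !inE /= => /grid_adjP[uv|uv|uv|uv] ->.
- by rewrite grid_lab_right //; apply: GridEdgeRight uv _.
- by rewrite grid_labC grid_lab_right //; apply: GridEdgeRight uv _; rewrite setUC.
- by rewrite grid_lab_down //; apply: GridEdgeDown uv _.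
- by rewrite grid_labC grid_lab_down //; apply: GridEdgeDown uv _; rewrite setUC.
Qed.

Lemma square_lab_sum i j : i.+1 < n1 -> j.+1 < n2 ->
  hlab i j + hlab i.+1 j + vlab i j + vlab i j.+1 = magic.
Proof.
move=> lt_i lt_j; rewrite /hlab /vlab /lab_h /lab_v.
have [m ->] : exists m, n1 = i.+2 + m by exists (n1 - i.+2); lia.
set K := 2 * n2 - 1; have : n2 <= K by rewrite /K; lia.
by rewrite !subn1 /=; nia.
Qed.

Definition cycle_lab (a b c d : V) :=
  g [set a; b] + g [set b; c] + g [set c; d] + g [set d; a].

Lemma cycle_lab_rot (a b c d : V) : cycle_lab b c d a = cycle_lab a b c d.
Proof. by rewrite /cycle_lab addnC !addnA. Qed.

Lemma cycle_lab_rev (a b c d : V) : cycle_lab a d c b = cycle_lab a b c d.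
Proof.
rewrite /cycle_lab [g [set a; d]]grid_labC [g [set d; c]]grid_labC.
rewrite [g [set c; b]]grid_labC [g [set b; a]]grid_labC.
by move: (g [set a; b]) (g [set b; c]) (g [set c; d]) (g [set d; a]) => *; lia.
Qed.

Lemma corner_cycle_lab (a b c d : V) : right_nbr a b -> down_nbr a d ->
  adj b c -> adj c d -> c != a -> cycle_lab a b c d = magic.
Proof.
move=> ab ad bc cd ca.
have ca' : ~ (val c.1 = val a.1 /\ val c.2 = val a.2).
  by case=> c1 c2; move/eqP: ca; apply; apply: gvert_eq.
have /andP[/eqP b1 /eqP b2] := ab; have /andP[/eqP d2 /eqP d1] := ad.
have [c1 c2] : val c.1 = (val a.1).+1 /\ val c.2 = (val a.2).+1.
  by move: bc cd; rewrite /grid_adj b1 b2 d1 d2 => /eqP ? /eqP ?; lia.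
have bc' : down_nbr b c by rewrite /down_nbr b1 b2 c1 c2 !eqxx.
have dc : right_nbr d c by rewrite /right_nbr d1 d2 c1 c2 !eqxx.
rewrite /cycle_lab (grid_lab_right ab) (grid_lab_down bc') (grid_labC c).
rewrite (grid_lab_right dc) (grid_labC d) (grid_lab_down ad) b1 b2 d1 d2.
by have := @square_lab_sum (val a.1) (val a.2); rewrite -c1 -c2 !ltn_ord; lia.
Qed.

Definition level (u : V) := val u.1 + val u.2.

Lemma nbr_of_level (u v : V) :
  adj u v -> level u <= level v -> right_nbr u v || down_nbr u v.
Proof.
rewrite /level => /grid_adjP[] uv; rewrite ?uv ?orbT //;
  by case/andP: uv => /eqP ? /eqP ? ?; exfalso; lia.
Qed.

Lemma cycle_lab_at_min (a b c d : V) : a != c -> b != d ->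
    adj a b -> adj b c -> adj c d -> adj d a -> level a <= level b -> level a <= level d ->
  cycle_lab a b c d = magic.
Proof.
move=> ac bd ab bc cd da le_ab le_ad; rewrite grid_adj_sym in da.
have ca : c != a by rewrite eq_sym.
case/orP: (nbr_of_level ab le_ab) => [rb|db]; case/orP: (nbr_of_level da le_ad) => [rd|dd].
- by rewrite (right_nbr_uniq rb rd) eqxx in bd.
- exact: corner_cycle_lab.
- by rewrite -cycle_lab_rev; apply: corner_cycle_lab; rewrite // grid_adj_sym.
- by rewrite (down_nbr_uniq db dd) eqxx in bd.
Qed.

Lemma cycle4_lab (a b c d : V) : uniq [:: a; b; c; d] ->
  adj a b -> adj b c -> adj c d -> adj d a -> cycle_lab a b c d = magic.
Proof.
rewrite /= !inE !negb_or => /and4P[/and3P[_ ac _] /andP[_ bd] _ _] ab bc cd da.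
have ca : c != a by rewrite eq_sym.
have db : d != b by rewrite eq_sym.
have : (level a <= level b /\ level a <= level d) \/ (level b <= level c /\ level b <= level a) \/
       (level c <= level d /\ level c <= level b) \/ (level d <= level a /\ level d <= level c).
  by rewrite /level; lia.
case=> [[l1 l2]|[[l1 l2]|[[l1 l2]|[l1 l2]]]].
- exact: cycle_lab_at_min l1 l2.
- by rewrite -(cycle_lab_rot a); apply: cycle_lab_at_min l1 l2.
- by rewrite -(cycle_lab_rot a) -(cycle_lab_rot b); apply: cycle_lab_at_min l1 l2.
- rewrite -(cycle_lab_rot a) -(cycle_lab_rot b) -(cycle_lab_rot c).
  exact: cycle_lab_at_min l1 l2.
Qed.

Let K := 2 * n2 - 1.

Lemma hlabE x y : hlab x y = (x * K + y).+1.
Proof. by rewrite /hlab /lab_h subn1 addnS. Qed.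

Lemma vlabE x y : x.+1 < n1 -> y < n2 -> vlab x y = ((n1 - x.+2) * K + (K.-1 - y)).+1.
Proof.
move=> lt_x lt_y; rewrite /vlab /lab_v -/K.
have -> : n1 - x.+1 = (n1 - x.+2).+1 by lia.
have : n2 <= K by rewrite /K; lia.
by rewrite mulSn; move: (n1 - x.+2) => m; lia.
Qed.

Lemma grid_lab_inj : {in E &, injective g}.
Proof.
have ltK (u : V) : val u.2 < K by have : val u.2 < n2 := ltn_ord u.2; rewrite /K; lia.
have ltK1 (u : V) : K.-1 - val u.2 < K.
  by have : val u.2 < n2 := ltn_ord u.2; rewrite /K; lia.
move=> e e' /grid_edgeP he /grid_edgeP he'.
case: he' => p' q' pq' ->; case: he => p q pq ->.
- rewrite !hlabE => /eq_add_S /(divmod_uniq (ltK p) (ltK p'))[e1 e2].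
  have epp : p = p' by apply: gvert_eq.
  by rewrite -epp in pq'; rewrite (right_nbr_uniq pq pq') epp.
- rewrite hlabE vlabE ?(down_nbr_ltn pq) ?ltn_ord //.
  move=> /eq_add_S /(divmod_uniq (ltK1 p) (ltK p'))[_] e2; exfalso.
  have := right_nbr_ltn pq'; have : val p.2 < n2 := ltn_ord p.2.
  by move: e2; rewrite /K; lia.
- rewrite hlabE vlabE ?(down_nbr_ltn pq') ?ltn_ord //.
  move=> /eq_add_S /(divmod_uniq (ltK p) (ltK1 p'))[_] e2; exfalso.
  have := right_nbr_ltn pq; have : val p'.2 < n2 := ltn_ord p'.2.
  by move: e2; rewrite /K; lia.
- rewrite !vlabE ?(down_nbr_ltn pq) ?(down_nbr_ltn pq') ?ltn_ord //.
  move=> /eq_add_S /(divmod_uniq (ltK1 p) (ltK1 p'))[e1 e2].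
  have epp : p = p'.
    have ltp : val p.2 < n2 := ltn_ord p.2; have ltp' : val p'.2 < n2 := ltn_ord p'.2.
    have := down_nbr_ltn pq; have := down_nbr_ltn pq'.
    by move: e1 e2; rewrite /K => e1 e2 *; apply: gvert_eq; lia.
  by rewrite -epp in pq'; rewrite (down_nbr_uniq pq pq') epp.
Qed.

Let N := (n1 - 1) * K + (n2 - 1).

Lemma grid_lab_range e : e \in E -> 0 < g e <= N.
Proof.
case/grid_edgeP=> p q pq _; rewrite ?hlabE ?vlabE ?(down_nbr_ltn pq) ?ltn_ord // /N.
- have : val p.1 < n1 := ltn_ord p.1; have := right_nbr_ltn pq.
  by rewrite /K; nia.
- have : val p.2 < n2 := ltn_ord p.2; have := down_nbr_ltn pq.
  by rewrite /K; nia.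
Qed.

Lemma right_edge_lab x y : x < n1 -> y.+1 < n2 -> exists2 e, e \in E & g e = hlab x y.
Proof.
move=> lt_x lt_y; pose p : V := (Ordinal lt_x, Ordinal (ltnW lt_y)).
have pq : right_nbr p (Ordinal lt_x, Ordinal lt_y) by rewrite /right_nbr /= !eqxx.
exists [set p; (Ordinal lt_x, Ordinal lt_y)]; last by rewrite (grid_lab_right pq).
exact/mem_grid_edges/right_nbr_adj.
Qed.

Lemma down_edge_lab x y : x.+1 < n1 -> y < n2 -> exists2 e, e \in E & g e = vlab x y.
Proof.
move=> lt_x lt_y; pose p : V := (Ordinal (ltnW lt_x), Ordinal lt_y).
have pq : down_nbr p (Ordinal lt_x, Ordinal lt_y) by rewrite /down_nbr /= !eqxx.
exists [set p; (Ordinal lt_x, Ordinal lt_y)]; last by rewrite (grid_lab_down pq).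
exact/mem_grid_edges/down_nbr_adj.
Qed.

Hypothesis n1_gt0 : 0 < n1.

Lemma grid_lab_surj k : 0 < k <= N -> exists2 e, e \in E & g e = k.
Proof.
case/andP=> k_gt0 k_le; have K_gt0 : 0 < K by move: k_le; rewrite /N /K; nia.
have def_k : k = (k.-1 %/ K * K + k.-1 %% K).+1 by rewrite -divn_eq prednK.
have lt_r : k.-1 %% K < K := ltn_pmod _ K_gt0.
move: def_k lt_r k_le; set q := k.-1 %/ K; set r := k.-1 %% K => -> lt_r lt_k.
case: (ltnP r (n2 - 1)) => r_n2.
- have lt_q : q < n1 by move: lt_k; rewrite /N /K; nia.
  have lt_r2 : r.+1 < n2 by lia.
  have [e he ge] := right_edge_lab lt_q lt_r2.
  by exists e; rewrite // ge hlabE.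
- have le_q : q.+2 <= n1.
    have : q * K < (n1 - 1) * K by move: lt_k; rewrite /N; lia.
    by rewrite ltn_pmul2r //; lia.
  have lt_x : (n1 - q.+2).+1 < n1 by lia.
  have lt_y : K.-1 - r < n2 by move: lt_r; rewrite /K; lia.
  have [e he ge] := down_edge_lab lt_x lt_y.
  exists e; rewrite // ge vlabE //.
  have -> : n1 - (n1 - q.+2).+2 = q by move: le_q; clear; lia.
  by have -> : K.-1 - (K.-1 - r) = r by move: lt_r; clear; lia.
Qed.

Lemma card_grid_edges : #|E| = N.
Proof.
have uniq_lab : uniq [seq g e | e in E].
  by rewrite map_inj_in_uniq ?enum_uniq // => e e'; rewrite !mem_enum; apply: grid_lab_inj.
have : perm_eq [seq g e | e in E] (iota 1 N).
  apply: uniq_perm => //; first exact: iota_uniq.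
  move=> k; rewrite mem_iota; apply/imageP/idP => [[e he ->]|k_range].
    by have := grid_lab_range he; lia.
  by have [|e he <-] := @grid_lab_surj k; [lia | exists e].
by move/perm_size; rewrite size_image size_iota.
Qed.

End GridLabeling.

Theorem lemma4 (n1 n2 : nat) (h2 : (2 <= n2)%N) (h12 : (n2 <= n1)%N) :
  Q2_magic (@grid_adj n1 n2) (grid_edges n1 n2) (@grid_lab n1 n2)
    ((2 * n1 - 1) * (2 * n2 - 1) + 1)%N.
Proof.
have n1_gt0 : 0 < n1 by lia.
split.
- exact: grid_lab_inj.
- by move=> e he; rewrite card_grid_edges //; apply: grid_lab_range.
- by move=> k; rewrite card_grid_edges // => hk; apply: grid_lab_surj.
- exact: cycle4_lab.
Qed.
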